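(* Let $X$ be a non-empty finite set and $\mathcal{P}$ a partition of $X$ with distinct block sizes $l_1<\cdots<l_r$. Let $U$ be a set containing one element of $\mathcal{B}_i$ for each $i\le r-1$, and one element of $\mathcal{C}_i$ for each $i\in\{1,\ldots,r\}$ such that either $i=1$ and $l_1\ge 2$, or $i\ge 2$ and $l_i-l_{i-1}\ge 2$. Then $\Sigma(X,\mathcal{P})$ is generated as a semigroup by $S(X,\mathcal{P})\cup U$.
   Context: $T(X,\mathcal{P})$ is the semigroup (under composition) of maps $f:X\to X$ mapping each block of $\mathcal{P}$ into some block; $S(X,\mathcal{P})$ is its group of units; $\Sigma(X,\mathcal{P})$ is the set of $f\in T(X,\mathcal{P})$ whose image intersects every block. For $i\le r-1$, $\mathcal{B}_i$ is the set of $f\in\Sigma(X,\mathcal{P})$ for which there are blocks $P_j,P_{j'},P_k,P_{k'}$ (possibly $j=j'$ or $k=k'$) with $|P_j|=|P_{j'}|=l_i$, $|P_k|=|P_{k'}|=l_{i+1}$, such that $f$ maps $P_j$ injectively into $P_k$, maps $P_{k'}$ onto $P_{j'}$, and maps every other block bijectively onto a block of the same size. For $i\le r$, $\mathcal{C}_i$ is the set of $f\in\Sigma(X,\mathcal{P})$ mapping each block into a block of the same size, such that one block of size $l_i$ has image of size $l_i-1$ and all other blocks are mapped injectively. *)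

From mathcomp Require Import all_boot.
Set Implicit Arguments. Unset Strict Implicit. Unset Printing Implicit Defensive.

Section Defs.
Variable X : finType.
Implicit Types (P : {set {set X}}) (f g : {ffun X -> X}).

Definition fcomp f g : {ffun X -> X} := [ffun x => f (g x)].
Definition fid : {ffun X -> X} := [ffun x => x].

(* the distinct block sizes, in increasing order: l_1 < ... < l_r is
   (sizes P)`_0 < ... < (sizes P)`_(r-1), r = size (sizes P) *)
Definition sizes P : seq nat := sort leq (undup [seq #|B| | B : {set X} in P]).
Definition l P (i : nat) : nat := nth 0 (sizes P) i.
Definition nsizes P : nat := size (sizes P).

Definition inT P f : Prop :=
  forall A, A \in P -> exists2 B, B \in P & f @: A \subset B.

Definition inS P f : Prop :=
  inT P f /\ exists g, [/\ inT P g, fcomp f g = fid & fcomp g f = fid].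

Definition inSigma P f : Prop :=
  inT P f /\ forall B, B \in P -> (f @: [set: X]) :&: B != set0.

(* B_i (0-indexed: sizes l P i and l P i.+1) *)
Definition inB P i f : Prop :=
  inSigma P f /\
  exists Pj Pj' Pk Pk',
    [/\ [/\ Pj \in P, Pj' \in P, Pk \in P & Pk' \in P],
        [/\ #|Pj| = l P i, #|Pj'| = l P i, #|Pk| = l P i.+1 & #|Pk'| = l P i.+1],
        {in Pj &, injective f} /\ f @: Pj \subset Pk,
        f @: Pk' = Pj' &
        forall B, B \in P -> B != Pj -> B != Pk' ->
          exists2 C, C \in P &
            [/\ #|C| = #|B|, f @: B = C & {in B &, injective f}]].

(* C_i (0-indexed: size l P i) *)
Definition inC P i f : Prop :=
  inSigma P f /\
  (forall B, B \in P -> exists2 C, C \in P & #|C| = #|B| /\ f @: B \subset C) /\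
  exists2 B0, B0 \in P &
    [/\ #|B0| = l P i, #|f @: B0| = (l P i).-1 &
        forall B, B \in P -> B != B0 -> {in B &, injective f}].

(* condition for C_i to be needed (0-indexed version of
   "i = 1 and l_1 >= 2, or i >= 2 and l_i - l_{i-1} >= 2") *)
Definition Cneeded P i : bool :=
  if i is j.+1 then 2 <= l P i - l P j else 2 <= l P 0.

Inductive gen (G : {ffun X -> X} -> Prop) : {ffun X -> X} -> Prop :=
| gen_base f : G f -> gen G f
| gen_comp f g : gen G f -> gen G g -> gen G (fcomp f g).

End Defs.

From mathcomp Require Import all_boot perm zify.
Set Implicit Arguments. Unset Strict Implicit. Unset Printing Implicit Defensive.

(* A map of Sigma(X,P) permutes the blocks, and the semigroup generated contains
   S(X,P).  First, every idempotent [collapse z w] moving one point inside its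
   block is generated: if C_i is required, an element of C_i is such a collapse
   up to permutations; otherwise l_i = l_(i-1) + 1, and an element of B_(i-1)
   corrected by a permutation, composed with itself around a transposition, lies
   in C_i.  Collapses generate every map sending each block into itself, by
   induction on the size of the image.  Second, for blocks A, B with |A| <= |B|
   some generated map sends A injectively into B and B onto A while fixing all
   other points: for consecutive sizes it comes from B_i, in general by
   conjugation.  Together with the block-fixing maps this gives every "swap" of
   two blocks.  Finally, a map of Sigma(X,P) is peeled into swaps and a
   block-fixing map, each swap lowering the number of points sent out of their
   block. *)

Section Maps.
Variable X : finType.
Implicit Types (D : {set X}) (f g k s : {ffun X -> X}).

Lemma fcompE f g x : fcomp f g x = f (g x). Proof. by rewrite ffunE. Qed.
Lemma fidE x : fid X x = x. Proof. by rewrite ffunE. Qed.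

Lemma neq_of_card_lt (Y Z : {set X}) : #|Y| < #|Z| -> Y != Z.
Proof. by apply: contraTneq => ->; rewrite ltnn. Qed.

Definition redirect k p m : {ffun X -> X} := [ffun u => if u == p then m else k u].

Lemma redirectE k p m u : u != p -> redirect k p m u = k u.
Proof. by rewrite ffunE => /negbTE ->. Qed.

Lemma imsetD1_collision k D p q : q \in D -> q != p -> k p = k q ->
  k @: (D :\ p) = k @: D.
Proof.
move=> qD qp kpq; apply/setP=> v; apply/imsetP/imsetP => [[u /setD1P[_ uD] ->] | [u uD ->]].
  by exists u.
have [-> | up] := eqVneq u p; first by exists q; rewrite // !inE qp.
by exists u; rewrite // !inE up.
Qed.

Lemma redirect_imset k D p q m : p \in D -> q \in D -> q != p -> k p = k q ->
  redirect k p m @: D = m |: k @: D.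
Proof.
move=> pD qD qp kpq; rewrite -(imsetD1_collision qD qp kpq).
apply/setP => v; rewrite in_setU1; apply/imsetP/idP => [[u uD ->] | ].
  have [-> | up] := eqVneq u p; first by rewrite ffunE !eqxx.
  have uDp : u \in D :\ p by rewrite !inE up.
  by rewrite redirectE // imset_f ?orbT.
case/orP => [/eqP -> | /imsetP[u /setD1P[up uD] ->]].
  by exists p; rewrite ?ffunE ?eqxx.
by exists u; rewrite ?redirectE.
Qed.

Definition exchanges (A B : {set X}) (w : {ffun X -> X}) :=
  [/\ {in A, forall u, w u \in B}, {in A &, injective w}, w @: B = A &
      forall u, u \notin A -> u \notin B -> w u = u].

Lemma exchanges_inv_comp (A C : {set X}) f g s : cancel g s -> cancel s g ->
  {in A &, injective f} -> f @: A \subset g @: C -> f @: C = g @: A ->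
  (forall u, u \notin A -> u \notin C -> g u = f u) -> exchanges A C (fcomp s f).
Proof.
move=> gK sK finj fAC fCA gf; split.
- move=> u uA; rewrite fcompE.
  have /imsetP[v vC ->] := subsetP fAC _ (imset_f f uA).
  by rewrite gK.
- by move=> u v uA vA; rewrite !fcompE => /(can_inj sK); exact: finj.
- apply/setP=> y; apply/imsetP/idP => [[u uC ->] | yA].
    rewrite fcompE; have /imsetP[v vA ->] : f u \in g @: A by rewrite -fCA imset_f.
    by rewrite gK.
  have /imsetP[u uC fu] : g y \in f @: C by rewrite fCA imset_f.
  by exists u; rewrite // fcompE -fu gK.
- by move=> u uA uC; rewrite fcompE -gf // gK.
Qed.

End Maps.

Section Bijections.
Variable X : finType.
Implicit Types (U V : {set X}) (sU sV : seq X) (i r : X -> X).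

Definition set_embedding U V i r :=
  [/\ {in U, forall x, i x \in V}, {in V, forall y, r y \in U} & {in U, cancel i r}].

Definition set_bijection U V i r := set_embedding U V i r /\ {in V, cancel r i}.

Lemma set_bijection_sym U V i r : set_bijection U V i r -> set_bijection V U r i.
Proof. by case=> -[iUV rVU riU] irV. Qed.

Lemma index_embedding sU sV u0 v0 : uniq sU -> size sU <= size sV -> u0 \in sU ->
  let i x := nth v0 sV (index x sU) in let r y := nth u0 sU (index y sV) in
  [/\ {in sU, forall x, i x \in sV}, {in sV, forall y, r y \in sU} &
      uniq sV -> {in sU, cancel i r}].
Proof.
move=> uU le u0U i r; have iU x : x \in sU -> index x sU < size sV.
  by move=> xU; rewrite (leq_trans _ le) ?index_mem.
split=> [x xU | y yV | uV x xU]; first exact/mem_nth/iU.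
  by case: (ltnP (index y sV) (size sU)) => h; [exact: mem_nth | rewrite /r nth_default].
by rewrite /r /i index_uniq ?iU ?nth_index.
Qed.

Lemma embedding_of_card_le U V u0 : #|U| <= #|V| -> u0 \in U ->
  exists i r, set_embedding U V i r.
Proof.
rewrite !cardE -(mem_enum U) => le u0U.
have [iUV rVU riU] := index_embedding u0 (enum_uniq U) le u0U.
exists (fun x => nth u0 (enum V) (index x (enum U))),
       (fun y => nth u0 (enum U) (index y (enum V))).
split=> [x xU | y yV | x xU].
- by rewrite -mem_enum iUV ?mem_enum.
- by rewrite -mem_enum rVU ?mem_enum.
- by rewrite riU ?enum_uniq ?mem_enum.
Qed.

Lemma embedding_imset U V i r : #|U| = #|V| -> set_embedding U V i r -> i @: U = V.
Proof.
move=> eUV [iUV _ riU]; apply/eqP.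
rewrite eqEcard (card_in_imset (can_in_inj riU)) eUV leqnn andbT.
by apply/subsetP=> _ /imsetP[x xU ->]; exact: iUV.
Qed.

Lemma embedding_bijection U V i r : #|U| = #|V| -> set_embedding U V i r ->
  set_bijection U V i r.
Proof.
move=> eUV emb; split=> // y; rewrite -(embedding_imset eUV emb).
by case/imsetP=> x xU ->; case: emb => _ _ ->.
Qed.

Lemma bijection_inj U V i r : set_bijection U V i r -> {in U &, injective i}.
Proof. by case=> -[_ _ /can_in_inj]. Qed.

Lemma bijection_imset U V i r : set_bijection U V i r -> i @: U = V.
Proof.
move=> [[iUV rVU _] irV]; apply/setP=> y; apply/imsetP/idP => [[x xU ->] | yV].
  exact: iUV.
by exists (r y); rewrite ?rVU ?irV.
Qed.

Lemma bijection_of_card_eq U V u0 : #|U| = #|V| -> u0 \in U ->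
  exists i r, set_bijection U V i r.
Proof.
move=> eUV u0U; have [i [r emb]] := embedding_of_card_le (eq_leq eUV) u0U.
by exists i, r; exact: embedding_bijection.
Qed.

Lemma bijection_of_card_eq2 U V z w p q : #|U| = #|V| ->
  z \in U -> w \in U -> z != w -> p \in V -> q \in V -> p != q ->
  exists i r, set_bijection U V i r /\ (i z = p /\ i w = q).
Proof.
move=> eUV zU wU zw pV qV pq.
(* Listing [z], [w] and [p], [q] first makes the index maps send [z] to [p]
   and [w] to [q]. *)
have enum2 (A : {set X}) a a' : a \in A -> a' \in A -> a != a' ->
    let s := [:: a, a' & enum (A :\ a :\ a')] in
    [/\ uniq s, size s = #|A| & forall y, (y \in s) = (y \in A)].
  move=> aA a'A aa' /=; split.
  - by rewrite enum_uniq !mem_enum !inE !eqxx (negbTE aa') /= mem_enum !inE eqxx andbF.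
  - by rewrite -cardE (cardsD1 a A) (cardsD1 a' (A :\ a)) !inE aA a'A eq_sym aa'.
  move=> y; rewrite !inE mem_enum !inE.
  by case: (y =P a) => [->|_]; [rewrite aA | case: (y =P a') => [->|]; rewrite ?a'A].
have [uU szU memU] := enum2 U z w zU wU zw.
have [uV szV memV] := enum2 V p q pV qV pq.
set sU := [:: z, w & _] in uU szU memU; set sV := [:: p, q & _] in uV szV memV.
have le : size sU <= size sV by rewrite szU szV eUV.
have [iUV rVU /(_ uV) riU] := index_embedding p uU le (mem_head z _).
exists (fun x => nth p sV (index x sU)), (fun y => nth z sU (index y sV)); split.
  apply: embedding_bijection => //.
  split=> [x xU | y yV | x xU].
  - by rewrite -memV iUV ?memU.
  - by rewrite -memU rVU ?memV.
  - by rewrite riU ?memU.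
by rewrite /= !eqxx (negbTE zw).
Qed.

End Bijections.

Section Sizes.
Variable X : finType.
Variable P : {set {set X}}.

Lemma sizes_uniq : uniq (sizes P).
Proof. by rewrite sort_uniq undup_uniq. Qed.

Lemma sizes_sorted : sorted ltn (sizes P).
Proof. by rewrite ltn_sorted_uniq_leq sizes_uniq sort_sorted //; exact: leq_total. Qed.

Lemma l_lt i j : i < j -> j < nsizes P -> l P i < l P j.
Proof.
move=> ij jn; apply: (sorted_ltn_nth ltn_trans 0 sizes_sorted); rewrite ?inE //.
exact: ltn_trans jn.
Qed.

Lemma block_of_size i : i < nsizes P -> exists2 A, A \in P & #|A| = l P i.
Proof.
move=> hi; have : l P i \in sizes P by exact: mem_nth.
by rewrite mem_sort mem_undup => /mapP[A]; rewrite mem_enum => PA ->; exists A.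
Qed.

Lemma index_l k : k < nsizes P -> index (l P k) (sizes P) = k.
Proof. by move=> hk; rewrite index_uniq // sizes_uniq. Qed.

Lemma index_sizes A : A \in P ->
  index #|A| (sizes P) < nsizes P /\ l P (index #|A| (sizes P)) = #|A|.
Proof.
move=> PA; have mA : #|A| \in sizes P.
  by rewrite mem_sort mem_undup map_f ?mem_enum.
by rewrite index_mem; split=> //; rewrite /l nth_index.
Qed.

Lemma index_sizes_lt A B : A \in P -> B \in P -> #|A| < #|B| ->
  index #|A| (sizes P) < index #|B| (sizes P).
Proof.
move=> PA PB lt; have [iA lA] := index_sizes PA; have [iB lB] := index_sizes PB.
rewrite ltnNge; apply: contraTN lt => le; rewrite -leqNgt -lA -lB.
by move: le; rewrite leq_eqVlt => /orP[/eqP -> // | /l_lt/(_ iA)/ltnW].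
Qed.

End Sizes.

Section Partition.
Variable X : finType.
Variable P : {set {set X}}.
Hypothesis hP : partition P [set: X].
Local Notation blk := (pblock P).
Implicit Types (A B C : {set X}) (f g h : {ffun X -> X}).

Let cover_all x : x \in cover P. Proof. by rewrite (cover_partition hP) inE. Qed.

Lemma mem_blk x : x \in blk x. Proof. by rewrite mem_pblock cover_all. Qed.
Lemma blk_in_P x : blk x \in P. Proof. exact/pblock_mem/cover_all. Qed.

Lemma blkE A x : A \in P -> x \in A -> blk x = A.
Proof. exact/def_pblock/(partition_trivIset hP). Qed.

Lemma blk_same x y : y \in blk x -> blk y = blk x.
Proof. exact/same_pblock/(partition_trivIset hP). Qed.

Lemma blk_ne0 A : A \in P -> exists x, x \in A.
Proof. by move=> PA; apply/set0Pn; exact: partition_neq0 hP PA. Qed.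

Lemma blk_disj A B u : A \in P -> B \in P -> A != B -> u \in A -> u \notin B.
Proof.
by move=> PA PB + uA; apply: contraNN => uB; rewrite -(blkE PA uA) (blkE PB uB).
Qed.

Lemma mem_blk_trans A x y : A \in P -> y \in blk x -> (y \in A) = (x \in A).
Proof.
move=> PA yx; apply/idP/idP => h; last by rewrite -(blkE PA h).
by rewrite -(blkE PA h) (blk_same yx) mem_blk.
Qed.

Definition preserves_blocks f := forall x y, y \in blk x -> f y \in blk (f x).

Definition sigma_map f := preserves_blocks f /\ forall B, B \in P -> exists x, f x \in B.

Lemma inTP f : inT P f <-> preserves_blocks f.
Proof.
split=> [hf x y yx | hf A PA].
  have [B PB sB] := hf _ (blk_in_P x).
  have fB z : z \in blk x -> f z \in B by move=> zx; exact/(subsetP sB)/imset_f.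
  by rewrite (blkE PB (fB _ (mem_blk x))) fB.
have [a aA] := blk_ne0 PA; exists (blk (f a)); first exact: blk_in_P.
by apply/subsetP=> _ /imsetP[y yA ->]; apply: hf; rewrite (blkE PA aA).
Qed.

Lemma inSigmaP f : inSigma P f <-> sigma_map f.
Proof.
rewrite /inSigma /sigma_map; split=> -[/inTP hT hS]; split=> // B PB.
  by have /set0Pn[_ /setIP[/imsetP[x _ ->] fxB]] := hS B PB; exists x.
have [x fx] := hS B PB; apply/set0Pn; exists (f x).
by rewrite inE fx andbT imset_f.
Qed.

Lemma preserves_blocks_comp f g :
  preserves_blocks f -> preserves_blocks g -> preserves_blocks (fcomp f g).
Proof. by move=> hf hg x y yx; rewrite !fcompE; apply/hf/hg. Qed.

Lemma sigma_map_comp f g : sigma_map f -> sigma_map g -> sigma_map (fcomp f g).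
Proof.
move=> [hf sf] [hg sg]; split=> [|B PB]; first exact: preserves_blocks_comp.
have [y fy] := sf B PB; have [x gx] := sg _ (blk_in_P y).
exists x; rewrite fcompE -(blkE PB fy).
by rewrite -(blk_same (hf _ _ (_ : g x \in blk y))) ?mem_blk // (blk_same gx) mem_blk.
Qed.

(* The induced map on blocks is onto the finite set P, hence injective. *)
Lemma sigma_map_blk_inj f x y :
  sigma_map f -> blk (f x) = blk (f y) -> blk x = blk y.
Proof.
move=> [hT hS] exy.
pose phi B := blk (f (odflt x [pick z in B])).
have phiE w : phi (blk w) = blk (f w).
  rewrite /phi; case: pickP => [z zB | /(_ w)]; last by rewrite mem_blk.
  exact/blk_same/hT.
have phiP : phi @: P = P.
  apply/setP=> D; apply/imsetP/idP => [[B PB ->] | PD]; first exact: blk_in_P.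
  have [w fw] := hS D PD; exists (blk w); first exact: blk_in_P.
  by rewrite phiE (blkE PD fw).
have /imset_injP phi_inj : #|phi @: P| == #|P| by rewrite phiP.
by apply: phi_inj; rewrite ?blk_in_P // !phiE.
Qed.

Lemma inS_of_inverse f g : preserves_blocks f -> preserves_blocks g ->
  fcomp f g = fid X -> fcomp g f = fid X -> inS P f.
Proof. by move=> /inTP hf /inTP hg fg gf; split=> //; exists g. Qed.

Lemma inS_inverse f : inS P f ->
  exists g, [/\ inS P g, fcomp f g = fid X & fcomp g f = fid X].
Proof.
move=> [hf [g [hg fg gf]]]; exists g; split=> //.
by apply: (inS_of_inverse (f := g) (g := f)) => //; apply/inTP.
Qed.

Lemma inS_sigma f : inS P f -> sigma_map f.
Proof.
move=> [/inTP hT [g [_ fg _]]]; split=> // B PB.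
by have [y yB] := blk_ne0 PB; exists (g y); rewrite -fcompE fg fidE.
Qed.

Lemma inS_of_inj f : injective f -> (forall A, A \in P -> f @: A \in P) -> inS P f.
Proof.
move=> finj fP; pose g := [ffun y => invF finj y].
have gE y : g y = invF finj y by rewrite ffunE.
have f_blk x : f @: blk x = blk (f x).
  by apply/esym/(blkE (fP _ (blk_in_P x)))/imset_f/mem_blk.
apply: (inS_of_inverse (g := g)).
- by move=> x y yx; rewrite -f_blk imset_f.
- move=> x y yx; rewrite !gE.
  have : y \in f @: blk (invF finj x) by rewrite f_blk f_invF.
  by case/imsetP => a aB ->; rewrite invF_f.
- by apply/ffunP=> x; rewrite fcompE gE f_invF fidE.
- by apply/ffunP=> x; rewrite fcompE gE invF_f fidE.
Qed.

Lemma inS_of_block_images f :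
  (forall A, A \in P -> f @: A \in P /\ {in A &, injective f}) ->
  (forall B, B \in P -> exists x, f x \in B) -> inS P f.
Proof.
move=> hf hS; have imE z : f @: blk z = blk (f z).
  by apply/esym/blkE; [case: (hf _ (blk_in_P z)) | exact/imset_f/mem_blk].
have fsig : sigma_map f by split=> // x y yx; rewrite -imE imset_f.
apply: inS_of_inj => [x y fxy | A PA]; last by case: (hf A PA).
have exy : blk x = blk y by apply: (sigma_map_blk_inj fsig); rewrite fxy.
by apply: (hf _ (blk_in_P x)).2; rewrite ?mem_blk // exy mem_blk.
Qed.

Definition fixes_blocks h := forall x, h x \in blk x.

Lemma fixes_blocks_sigma h : fixes_blocks h -> sigma_map h.
Proof.
move=> hh; split=> [x y yx | B PB].
  by rewrite (blk_same (hh x)) -(blk_same yx) hh.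
by have [x xB] := blk_ne0 PB; exists x; rewrite -(blkE PB xB).
Qed.

Lemma fixes_blocks_inj_inS h : fixes_blocks h -> injective h -> inS P h.
Proof.
move=> hh hinj; apply: inS_of_inj => // A PA.
suff -> : h @: A = A by [].
apply/eqP; rewrite eqEcard card_imset // leqnn andbT.
by apply/subsetP=> _ /imsetP[a aA ->]; rewrite -(blkE PA aA).
Qed.

Definition swap_blocks A B (i r : X -> X) : {ffun X -> X} :=
  [ffun u => if u \in A then i u else if u \in B then r u else u].

Lemma swap_blocksE A B i r u :
  swap_blocks A B i r u = if u \in A then i u else if u \in B then r u else u.
Proof. by rewrite ffunE. Qed.

Section SwapBlocks.
Variables (A B : {set X}) (i r : X -> X).
Hypotheses (PA : A \in P) (PB : B \in P).
Hypotheses (iAB : {in A, forall u, i u \in B}) (rBA : {in B, forall u, r u \in A}).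

Lemma swap_blocks_preserves : preserves_blocks (swap_blocks A B i r).
Proof.
apply/inTP => Y PY.
have [-> | nYA] := eqVneq Y A.
  by exists B => //; apply/subsetP => _ /imsetP[u uA ->]; rewrite swap_blocksE uA iAB.
have [eYB | nYB] := eqVneq Y B.
  subst Y; exists A => //; apply/subsetP => _ /imsetP[u uB ->].
  by rewrite swap_blocksE (negbTE (blk_disj PB PA nYA uB)) uB rBA.
exists Y => //; apply/subsetP => _ /imsetP[u uY ->].
by rewrite swap_blocksE (negbTE (blk_disj PY PA nYA uY)) (negbTE (blk_disj PY PB nYB uY)).
Qed.

Hypotheses (riA : {in A, cancel i r}) (irB : {in B, cancel r i}).

Lemma swap_blocksK : fcomp (swap_blocks A B i r) (swap_blocks B A r i) = fid X.
Proof.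
apply/ffunP => u; rewrite fcompE fidE [swap_blocks B A r i u]swap_blocksE.
case: ifPn => uB; first by rewrite swap_blocksE rBA // irB.
case: ifPn => uA; last by rewrite swap_blocksE (negbTE uB) (negbTE uA).
have nBA : B != A by apply: contraNneq uB => ->.
by rewrite swap_blocksE (negbTE (blk_disj PB PA nBA (iAB uA))) iAB // riA.
Qed.

End SwapBlocks.

Lemma swap_blocks_inS A B i r : A \in P -> B \in P -> set_bijection A B i r ->
  inS P (swap_blocks A B i r).
Proof.
move=> PA PB [[iAB rBA riA] irB].
by apply: (inS_of_inverse (g := swap_blocks B A r i));
  [exact: swap_blocks_preserves | exact: swap_blocks_preserves
  | exact: swap_blocksK | exact: swap_blocksK].
Qed.

(* Conjugating an exchange of [A] and [C] by one of [C] and [B] exchanges [A]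
   and [B]; [C] is restored because the second embedding is retracted. *)
Lemma swap_blocks_conj A B C iAC rAC iCB rCB :
  A \in P -> B \in P -> C \in P -> A != B -> A != C -> C != B ->
  set_embedding A C iAC rAC -> set_embedding C B iCB rCB ->
  exchanges A B (fcomp (swap_blocks C B iCB rCB)
                   (fcomp (swap_blocks A C iAC rAC) (swap_blocks C B iCB rCB))).
Proof.
move=> PA PB PC nAB nAC nCB [a1 a2 a3] [c1 c2 c3].
have nBA : B != A by rewrite eq_sym.
have nBC : B != C by rewrite eq_sym.
have nCA : C != A by rewrite eq_sym.
have dAB u : u \in A -> u \notin B := blk_disj PA PB nAB.
have dAC u : u \in A -> u \notin C := blk_disj PA PC nAC.
have dBA u : u \in B -> u \notin A := blk_disj PB PA nBA.
have dBC u : u \in B -> u \notin C := blk_disj PB PC nBC.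
have dCA u : u \in C -> u \notin A := blk_disj PC PA nCA.
pose sCB := swap_blocks C B iCB rCB; pose sAC := swap_blocks A C iAC rAC.
pose w := fcomp sCB (fcomp sAC sCB).
have wA u : u \in A -> w u = iCB (iAC u).
  move=> uA; rewrite !fcompE [sCB u]swap_blocksE (negbTE (dAC _ uA)) (negbTE (dAB _ uA)).
  by rewrite [sAC u]swap_blocksE uA swap_blocksE a1.
have wB u : u \in B -> w u = rAC (rCB u).
  move=> uB; have rC := c2 _ uB; have rA := a2 _ rC.
  rewrite !fcompE [sCB u]swap_blocksE (negbTE (dBC _ uB)) uB.
  rewrite [sAC _]swap_blocksE (negbTE (dCA _ rC)) rC swap_blocksE.
  by rewrite (negbTE (dAC _ rA)) (negbTE (dAB _ rA)).
have wC u : u \in C -> w u = u.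
  move=> uC; have iB := c1 _ uC.
  rewrite !fcompE [sCB u]swap_blocksE uC [sAC _]swap_blocksE.
  by rewrite (negbTE (dBA _ iB)) (negbTE (dBC _ iB)) swap_blocksE (negbTE (dBC _ iB)) iB c3.
split.
- by move=> u uA; rewrite wA // c1 // a1.
- move=> u v uA vA; rewrite !wA // => e.
  by rewrite -(a3 _ uA) -(c3 _ (a1 _ uA)) e c3 ?a3 // a1.
- apply/setP => x; apply/imsetP/idP => [[u uB ->] | xA].
    by rewrite wB // a2 // c2.
  exists (iCB (iAC x)); first by rewrite c1 // a1.
  by rewrite wB ?c1 ?a1 // c3 ?a3 // a1.
- move=> u uA uB; have [uC | uC] := boolP (u \in C); first exact: wC.
  rewrite !fcompE [sCB u]swap_blocksE (negbTE uC) (negbTE uB).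
  rewrite [sAC u]swap_blocksE (negbTE uA) (negbTE uC).
  by rewrite swap_blocksE (negbTE uC) (negbTE uB).
Qed.

Definition collapse z w : {ffun X -> X} := [ffun x => if x == z then w else x].

(* If [h x = h y] with [x != y], some [z] of the block of [x] is missed by [h];
   redirecting [y] to [z] enlarges the image and
   [h = collapse z (h x) \o redirect h y z]. *)
Lemma fixes_blocks_factor h : fixes_blocks h -> ~~ injectiveb h ->
  exists z w h', [/\ w \in blk z, z != w, fixes_blocks h',
    h = fcomp (collapse z w) h' & #|h' @: [set: X]| = #|h @: [set: X]|.+1].
Proof.
move=> hh /injectivePn[x [y xy hxy]]; set C := blk x.
have xC : x \in C := mem_blk x.
have yC : y \in C by rewrite /C -(blk_same (hh x)) hxy (blk_same (hh y)) mem_blk.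
have /subsetPn[z zC zn] : ~~ (C \subset h @: C).
  apply/negP => /subset_leq_card; rewrite -(imsetD1_collision xC xy (esym hxy)).
  by have := leq_imset_card h (C :\ y); rewrite (cardsD1 y C) yC; lia.
have zim : z \notin h @: [set: X].
  apply: contra zn => /imsetP[u _ ezu]; rewrite ezu imset_f //.
  by rewrite /C -(blk_same zC) ezu (blk_same (hh u)) mem_blk.
exists z, (h x), (redirect h y z); split.
- by rewrite (blk_same zC) hh.
- by apply: contraNneq zim => ->; rewrite imset_f.
- move=> u; have [-> | uy] := eqVneq u y; last by rewrite redirectE.
  by rewrite ffunE eqxx (blk_same yC).
- apply/ffunP=> u; rewrite fcompE [collapse _ _ _]ffunE.
  have [-> | uy] := eqVneq u y; first by rewrite ffunE !eqxx hxy.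
  rewrite redirectE //; case: eqP => // hu.
  by case/negP: zim; rewrite -hu imset_f.
by rewrite (redirect_imset _ (in_setT y) (in_setT x) xy (esym hxy)) cardsU1 zim.
Qed.

Lemma gen_fixes_blocks_of_collapses (G : {ffun X -> X} -> Prop) :
  (forall s, inS P s -> gen G s) ->
  (forall z w, w \in blk z -> z != w -> gen G (collapse z w)) ->
  forall h, fixes_blocks h -> gen G h.
Proof.
move=> GS Gcollapse h.
have [n] := ubnP (#|X| - #|h @: [set: X]|); elim: n h => // n IH h hn hh.
have [/injectiveP hinj | nhinj] := boolP (injectiveb h).
  exact/GS/fixes_blocks_inj_inS.
have [z [w [h' [wz zw hh' eh card_h']]]] := fixes_blocks_factor hh nhinj.
rewrite eh; apply: gen_comp; first exact: Gcollapse.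
by apply: IH hh'; have := max_card (h' @: [set: X]); lia.
Qed.

(* [f] in B_i maps P_j into P_k and P_k' onto P_j'; correcting it by a bijection
   [g] that agrees with [f] off P_j and P_k' but maps P_k' onto P_k and P_j onto
   P_j' turns [f] into an exchange of P_j and P_k'. *)
Lemma inB_exchange i f : i.+1 < nsizes P -> inB P i f ->
  exists A C s, [/\ A \in P, C \in P, #|A| = l P i & #|C| = l P i.+1]
                /\ (inS P s /\ exchanges A C (fcomp s f)).
Proof.
move=> hi [/inSigmaP fsig [Pj [Pj' [Pk [Pk' [[PPj PPj' PPk PPk'] [sj sj' sk sk']
  [finj fPjk] fPkj fother]]]]]].
have nPjPk' : Pj != Pk' by apply: neq_of_card_lt; rewrite sj sk' l_lt.
have fPj u : u \in Pj -> f u \in Pk by move=> uPj; exact/(subsetP fPjk)/imset_f.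
have fPk' u : u \in Pk' -> f u \in Pj' by move=> uPk'; rewrite -fPkj imset_f.
have [pk' pk'P] := blk_ne0 PPk'; have [pj pjP] := blk_ne0 PPj.
have [e1 [e1' bij1]] := bijection_of_card_eq (etrans sk' (esym sk)) pk'P.
have [e2 [e2' bij2]] := bijection_of_card_eq (etrans sj (esym sj')) pjP.
pose g := [ffun x => if x \in Pk' then e1 x else if x \in Pj then e2 x else f x].
have gPk' : {in Pk', g =1 e1} by move=> x xP; rewrite ffunE xP.
have gPj : {in Pj, g =1 e2}.
  by move=> x xP; rewrite ffunE xP (negbTE (blk_disj PPj PPk' nPjPk' xP)).
have gO x : x \notin Pj -> x \notin Pk' -> g x = f x.
  by move=> xj xk'; rewrite ffunE (negbTE xj) (negbTE xk').
have gPk'_img : g @: Pk' = Pk by rewrite (eq_in_imset gPk') (bijection_imset bij1).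
have gPj_img : g @: Pj = Pj' by rewrite (eq_in_imset gPj) (bijection_imset bij2).
have [s [Ss gs sg]] : exists s, [/\ inS P s, fcomp g s = fid X & fcomp s g = fid X].
  apply/inS_inverse/inS_of_block_images => [A PA | B PB].
    have [-> | nAk'] := eqVneq A Pk'.
      rewrite gPk'_img; split=> // x y xP yP; rewrite !gPk' //.
      exact: (bijection_inj bij1 xP yP).
    have [-> | nAj] := eqVneq A Pj.
      rewrite gPj_img; split=> // x y xP yP; rewrite !gPj //.
      exact: (bijection_inj bij2 xP yP).
    have gA : {in A, g =1 f}.
      by move=> x xA; rewrite gO ?(blk_disj PA) // eq_sym.
    have [C PC [_ fAC fAinj]] := fother A PA nAj nAk'.
    by rewrite (eq_in_imset gA) fAC; split=> // x y xA yA; rewrite !gA //; exact: fAinj.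
  have [-> | nBk] := eqVneq B Pk; first by exists pk'; rewrite -gPk'_img imset_f.
  have [-> | nBj'] := eqVneq B Pj'; first by exists pj; rewrite -gPj_img imset_f.
  have [x fx] := fsig.2 B PB; exists x.
  have xj : x \notin Pj.
    by apply: contra nBk => /fPj fxk; rewrite -(blkE PB fx) (blkE PPk fxk).
  have xk' : x \notin Pk'.
    by apply: contra nBj' => /fPk' fxj; rewrite -(blkE PB fx) (blkE PPj' fxj).
  by rewrite gO.
have gK : cancel g s by move=> x; rewrite -fcompE sg fidE.
have sK : cancel s g by move=> y; rewrite -fcompE gs fidE.
exists Pj, Pk', s; split=> //; split=> //.
by apply: exchanges_inv_comp gK sK finj _ _ _ => //; rewrite ?gPk'_img ?fPkj.
Qed.

(* The shape of an element of C_i, with its shrunk block [B0] prescribed. *)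
Definition shrinks_block B0 k :=
  [/\ sigma_map k,
      forall Y, Y \in P -> exists2 Z, Z \in P & #|Z| = #|Y| /\ k @: Y \subset Z,
      #|k @: B0| = #|B0|.-1 &
      forall Y, Y \in P -> Y != B0 -> {in Y &, injective k}].

(* If [k p = k q] with [p != q], redirecting [p] to a point [m] missed in the
   target block of [B0] gives a permutation [kt] with [k = kt \o collapse p q]. *)
Lemma shrinks_block_factor B0 k : B0 \in P -> shrinks_block B0 k ->
  exists p q kt, [/\ p \in B0, q \in B0, p != q, inS P kt &
                     k = fcomp kt (collapse p q)].
Proof.
move=> PB0 [ksig kZ kB0 kinj].
have [b0 b0B] := blk_ne0 PB0.
have B0_gt0 : 0 < #|B0| by apply/card_gt0P; exists b0.
have /dinjectivePn[p pB [q /andP[qp qB] kpq]] : ~~ dinjectiveb k B0.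
  by apply/negP => /dinjectiveP/imset_injP/eqP; lia.
have [Z PZ [cZ kB0Z]] := kZ _ PB0.
have /subsetPn[m mZ mk] : ~~ (Z \subset k @: B0).
  by apply/negP => /subset_leq_card; lia.
have ktB0 : redirect k p m @: B0 = Z.
  apply/eqP; rewrite eqEcard cZ (redirect_imset _ pB qB qp kpq) cardsU1 mk kB0.
  apply/andP; split; last by rewrite add1n (ltn_predK B0_gt0).
  by apply/subsetP => v /setU1P[-> | /(subsetP kB0Z)].
exists p, q, (redirect k p m); split=> //; first by rewrite eq_sym.
  apply: inS_of_block_images => [Y PY | B PB].
    have [-> | nYB0] := eqVneq Y B0.
      by rewrite ktB0; split=> //; apply/imset_injP; rewrite ktB0 cZ.
    have ktY : {in Y, redirect k p m =1 k}.
      move=> u uY; rewrite redirectE //; apply: contraTneq uY => ->.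
      by apply: (blk_disj PB0 PY); rewrite // eq_sym.
    have [ZY PZY [cZY kYZ]] := kZ _ PY.
    have -> : redirect k p m @: Y = ZY.
      rewrite (eq_in_imset ktY); apply/eqP.
      by rewrite eqEcard kYZ cZY (card_in_imset (kinj _ PY nYB0)) leqnn.
    by split=> // u v uY vY; rewrite !ktY //; exact: (kinj _ PY nYB0).
  have [x kx] := ksig.2 B PB.
  have [exp | xp] := eqVneq x p; first by exists q; rewrite redirectE // -kpq -exp.
  by exists x; rewrite redirectE.
apply/ffunP => u; rewrite fcompE [collapse _ _ _]ffunE.
have [-> | up] := eqVneq u p; last by rewrite redirectE.
by rewrite redirectE.
Qed.

Lemma collapse_conj B0 p q z w : B0 \in P -> p \in B0 -> q \in B0 -> p != q ->
  w \in blk z -> z != w -> #|blk z| = #|B0| ->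
  exists s s', [/\ inS P s, inS P s' & collapse z w = fcomp s' (fcomp (collapse p q) s)].
Proof.
move=> PB0 pB qB pq wz zw cz; set C := blk z.
have PC : C \in P := blk_in_P z.
have zC : z \in C := mem_blk z.
have [be [be' [bij [bez bew]]]] := bijection_of_card_eq2 cz zC wz zw pB qB pq.
have bij' := set_bijection_sym bij.
case: (bij) => -[beC be'B0 be'be] bebe'.
exists (swap_blocks C B0 be be'), (swap_blocks B0 C be' be); split.
- exact: swap_blocks_inS.
- exact: swap_blocks_inS.
apply/ffunP => u; rewrite !fcompE [collapse z w u]ffunE [collapse p q _]ffunE.
rewrite [swap_blocks C B0 _ _ u]swap_blocksE.
have [uC | uC] := boolP (u \in C).
  have [-> | uz] := eqVneq u z; first by rewrite bez eqxx swap_blocksE qB -bew be'be.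
  have bup : be u != p by rewrite -bez; apply: contraNneq uz => /(can_in_inj be'be) ->.
  by rewrite (negbTE bup) swap_blocksE beC // be'be.
have uz : u != z by apply: contraNneq uC => ->.
rewrite (negbTE uz); have [uB | uB] := boolP (u \in B0).
  have nCB0 : C != B0 by apply: contraNneq uC => ->.
  have be'uB := blk_disj PC PB0 nCB0 (be'B0 _ uB).
  have bup : be' u != p by apply: contraNneq be'uB => ->.
  by rewrite (negbTE bup) swap_blocksE (negbTE be'uB) be'B0 // bebe'.
have up : u != p by apply: contraNneq uB => ->.
by rewrite (negbTE up) swap_blocksE (negbTE uB) (negbTE uC).
Qed.

Lemma fixes_blocks_shrinks B0 k : fixes_blocks k -> #|k @: B0| = #|B0|.-1 ->
  (forall Y, Y \in P -> Y != B0 -> {in Y &, injective k}) -> shrinks_block B0 k.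
Proof.
move=> k_fix kB0 kinj; split=> //; first exact: fixes_blocks_sigma.
move=> Y PY; exists Y => //; split=> //; apply/subsetP => _ /imsetP[u uY ->].
by rewrite -(blkE PY uY).
Qed.

Lemma tperm_inS C m p : C \in P -> m \in C -> p \in C -> inS P [ffun u => tperm m p u].
Proof.
move=> PC mC pC; apply: fixes_blocks_inj_inS => [u | u v].
  rewrite ffunE; have [uC | uC] := boolP (u \in C).
    by rewrite (blkE PC uC); case: tpermP.
  by rewrite tpermD ?mem_blk //; apply: contraNneq uC => <-.
by rewrite !ffunE => /perm_inj.
Qed.

(* [w] collapses [C] onto the smaller [A]: with [w p = w q] and [m] missed by
   [w] on [A], the transposition [(m p)] steers [w @: A] away from [p], so that
   [w \o (m p) \o w] is injective on [A] and shrinks [C] by one. *)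
Lemma exchange_shrinks A C w : A \in P -> C \in P -> #|C| = #|A|.+1 ->
  exchanges A C w -> exists s, inS P s /\ shrinks_block C (fcomp w (fcomp s w)).
Proof.
move=> PA PC cC [wAC winj wCA wid].
have nAC : A != C by apply: neq_of_card_lt; rewrite cC.
have AnC u : u \in A -> u \notin C := blk_disj PA PC nAC.
have c_wA : #|w @: A| = #|A| := card_in_imset winj.
have /dinjectivePn[p pC [q /andP[qp qC] wpq]] : ~~ dinjectiveb w C.
  by apply/negP => /dinjectiveP/imset_injP/eqP; rewrite wCA; lia.
have /subsetPn[m mC mwA] : ~~ (C \subset w @: A).
  by apply/negP => /subset_leq_card; lia.
have winjC : {in C :\ p &, injective w}.
  apply/imset_injP; rewrite (imsetD1_collision qC qp wpq) wCA.
  by apply/eqP; have := cardsD1 p C; rewrite pC; lia.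
have Ss := tperm_inS PC mC pC; set s := [ffun u => _] in Ss.
have sC u : u \in C -> s u \in C by move=> uC; rewrite ffunE; case: tpermP.
have sO u : u \notin C -> s u = u.
  by move=> uC; rewrite ffunE tpermD //; apply: contraNneq uC => <-.
exists s; split=> //; set k := fcomp w _.
have wC u : u \in C -> w u \in A by move=> uC; rewrite -wCA imset_f.
have kC u : u \in C -> k u = w (w u) by move=> uC; rewrite !fcompE sO // AnC // wC.
have kO u : u \notin A -> u \notin C -> k u = u by move=> uA uC; rewrite !fcompE !(wid, sO).
apply: fixes_blocks_shrinks => [u | | Y PY nYC].
- have [uA | uA] := boolP (u \in A).
    by rewrite (blkE PA uA) !fcompE wC // sC // wAC.
  have [uC | uC] := boolP (u \in C); last by rewrite kO ?mem_blk.
  by rewrite (blkE PC uC) kC // wAC // wC.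
- have -> : k @: C = w @: A.
    apply/setP => v; apply/imsetP/imsetP => [[u uC ->] | [a]].
      by exists (w u); rewrite ?kC ?wC.
    by rewrite -wCA => /imsetP[u uC ->] ->; exists u; rewrite ?kC.
  by rewrite c_wA cC.
have [-> {Y PY nYC} | nYA] := eqVneq Y A.
  have swA u : u \in A -> s (w u) \in C :\ p.
    move=> uA; have wum : w u != m by apply: contraNneq mwA => <-; exact: imset_f.
    rewrite !inE sC ?wAC // andbT ffunE.
    by apply: contraNneq wum => e; rewrite -[w u](tpermK m p) e tpermR.
  move=> u v uA vA; rewrite !fcompE => /(winjC _ _ (swA _ uA) (swA _ vA)).
  by rewrite !ffunE => /perm_inj; exact: winj.
move=> u v uY vY; have outY z : z \in Y -> z \notin A /\ z \notin C.
  by move=> zY; split; apply: blk_disj zY.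
by case: (outY u uY) (outY v vY) => uA uC [vA vC]; rewrite !kO.
Qed.

Lemma inC_shrinks i f : inC P i f ->
  exists2 B0, B0 \in P & #|B0| = l P i /\ shrinks_block B0 f.
Proof.
move=> [/inSigmaP fsig [fZ [B0 PB0 [cB0 cfB0 finj]]]].
by exists B0 => //; split=> //; split=> //; rewrite cB0.
Qed.

End Partition.

Section Generation.
Variables (X : finType) (P : {set {set X}}).
Hypothesis hP : partition P [set: X].
Variables b c : nat -> {ffun X -> X}.
Hypothesis hb : forall i, i.+1 < nsizes P -> inB P i (b i).
Hypothesis hc : forall i, i < nsizes P -> Cneeded P i -> inC P i (c i).
Local Notation blk := (pblock P).
Implicit Types (A B C : {set X}) (f g h k : {ffun X -> X}).

Definition generator g :=
  inS P g \/ (exists2 i, i.+1 < nsizes P & g = b i)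
          \/ (exists i, [/\ i < nsizes P, Cneeded P i & g = c i]).
Local Notation generated := (gen generator).

Lemma gen_inS s : inS P s -> generated s.
Proof. by move=> Ss; apply: gen_base; left. Qed.

Lemma gen_sigma f : generated f -> sigma_map P f.
Proof.
elim=> [g [Sg | [[i hi ->] | [i [hi hn ->]]]] | f1 f2 _ hf1 _ hf2].
- exact: inS_sigma.
- by case: (hb hi) => /(inSigmaP hP).
- by case: (hc hi hn) => /(inSigmaP hP).
- exact: sigma_map_comp.
Qed.

Definition exchangeable A B := exists2 w, generated w & exchanges A B w.

Lemma exchangeable_of_B i : i.+1 < nsizes P ->
  exists A C, [/\ A \in P, C \in P, #|A| = l P i, #|C| = l P i.+1 & exchangeable A C].
Proof.
move=> hi; have [A [C [s [[PA PC cA cC] [Ss exAC]]]]] := inB_exchange hP hi (hb hi).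
exists A, C; split=> //; exists (fcomp s (b i)) => //.
by apply: gen_comp; [exact: gen_inS | apply: gen_base; right; left; exists i].
Qed.

Lemma gen_collapse_of_shrinks B0 k : B0 \in P -> generated k -> shrinks_block P B0 k ->
  forall z w, w \in blk z -> z != w -> #|blk z| = #|B0| -> generated (collapse z w).
Proof.
move=> PB0 kG kB0 z w wz zw cz.
have [p [q [kt [pB qB pq Skt ek]]]] := shrinks_block_factor hP PB0 kB0.
have [kt' [Skt' _ kt'kt]] := inS_inverse hP Skt.
have Gpq : generated (collapse p q).
  have -> : collapse p q = fcomp kt' k.
    by apply/ffunP => u; rewrite ek !fcompE -[kt' _]fcompE kt'kt fidE.
  by apply: gen_comp; first exact: gen_inS.
have [s [s' [Ss Ss' ->]]] := collapse_conj hP PB0 pB qB pq wz zw cz.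
by apply: gen_comp; [exact: gen_inS | apply: gen_comp; last exact: gen_inS].
Qed.

(* For a block size not covered by [c], the gap to the previous size is one,
   and an exchange obtained from [b] yields a map shrinking a block of that size. *)
Lemma gen_collapse z w : w \in blk z -> z != w -> generated (collapse z w).
Proof.
move=> wz zw; set C := blk z.
have PC : C \in P := blk_in_P hP z.
have c2 : 2 <= #|C|.
  have : [set z; w] \subset C by apply/subsetP => v /set2P[] ->; rewrite ?mem_blk.
  by move/subset_leq_card; rewrite cards2 zw.
have [hi li] := index_sizes PC.
set i := index #|C| (sizes P) in hi li.
have [needed | not_needed] := boolP (Cneeded P i).
  have [B0 PB0 [cB0 shB0]] := inC_shrinks hP (hc hi needed).
  apply: (gen_collapse_of_shrinks PB0 _ shB0) => //; last by rewrite cB0 li.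
  by apply: gen_base; right; right; exists i.
move: not_needed hi li; rewrite /Cneeded; case: i => [|j] /= not_needed hi li.
  by move: not_needed; rewrite li c2.
have [A [C0 [PA PC0 cA cC0 [w0 w0G exA]]]] := exchangeable_of_B hi.
have cC0A : #|C0| = #|A|.+1.
  by move: not_needed (l_lt (ltnSn j) hi); rewrite cC0 cA -leqNgt; lia.
have [s [Ss shC0]] := exchange_shrinks hP PA PC0 cC0A exA.
apply: (gen_collapse_of_shrinks PC0 _ shC0) => //; last by rewrite cC0 li.
by apply: gen_comp => //; apply: gen_comp => //; apply: gen_inS.
Qed.

Lemma gen_fixes_blocks h : fixes_blocks P h -> generated h.
Proof. exact: (gen_fixes_blocks_of_collapses hP gen_inS gen_collapse). Qed.

(* [w] exchanging [A] and [B] is corrected on [B] by block-fixing maps: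
   [h] first moves each [u] of [B] to the [w]-preimage of [r u], and [h'] then
   replaces [w x] by [i x]. *)
Lemma gen_swap_blocks A B i r : A \in P -> B \in P -> A != B -> exchangeable A B ->
  {in A, forall u, i u \in B} -> {in B, forall u, r u \in A} ->
  generated (swap_blocks A B i r).
Proof.
move=> PA PB nAB [w wG [wAB winj wBA wid]] iAB rBA.
have AnB u : u \in A -> u \notin B := blk_disj hP PA PB nAB.
pose h' := [ffun y => if y \in B then
                        if [pick x in A | w x == y] is Some x then i x else y
                      else y].
pose h := [ffun x => if x \in B then
                       if [pick z in B | w z == r x] is Some z then z else x
                     else x].
have h'_fix : fixes_blocks P h'.
  move=> y; rewrite ffunE; have [yB | yB] := boolP (y \in B); last exact: mem_blk.
  by rewrite (blkE hP PB yB); case: pickP => [x /andP[xA _] | _ //]; exact: iAB.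
have h_fix : fixes_blocks P h.
  move=> y; rewrite ffunE; have [yB | yB] := boolP (y \in B); last exact: mem_blk.
  by rewrite (blkE hP PB yB); case: pickP => [x /andP[xB _] | ].
have -> : swap_blocks A B i r = fcomp h' (fcomp w h).
  apply/ffunP => x; rewrite !fcompE swap_blocksE.
  have [xA | xA] := boolP (x \in A).
    rewrite [h x]ffunE (negbTE (AnB _ xA)) ffunE wAB //.
    case: pickP => [x' /andP[x'A /eqP e] | /(_ x)]; first by rewrite (winj _ _ x'A xA e).
    by rewrite xA eqxx.
  have [xB | xB] := boolP (x \in B).
    have rA := rBA _ xB.
    rewrite [h x]ffunE xB; case: pickP => [z /andP[zB /eqP ->] | none].
      by rewrite ffunE (negbTE (AnB _ rA)).
    by move: rA; rewrite -wBA => /imsetP[z zB ez]; have := none z; rewrite zB ez eqxx.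
  by rewrite [h x]ffunE (negbTE xB) wid // ffunE (negbTE xB).
by apply: gen_comp; last apply: gen_comp => //; exact: gen_fixes_blocks.
Qed.

Lemma exchangeable_eq_card A B : A \in P -> B \in P -> A != B -> #|A| = #|B| ->
  exchangeable A B.
Proof.
move=> PA PB nAB eAB; have [a aA] := blk_ne0 hP PA.
have [be [be' bij]] := bijection_of_card_eq eAB aA.
case: (bij) => -[beB be'A be'be] bebe'.
have BnA u : u \in B -> u \notin A by apply: (blk_disj hP PB PA); rewrite eq_sym.
exists (swap_blocks A B be be'); first exact/gen_inS/swap_blocks_inS.
split.
- by move=> u uA; rewrite swap_blocksE uA beB.
- by move=> u v uA vA; rewrite !swap_blocksE uA vA; exact: (can_in_inj be'be).
- apply/setP => x; apply/imsetP/idP => [[u uB ->] | xA].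
    by rewrite swap_blocksE (negbTE (BnA _ uB)) uB be'A.
  by exists (be x); rewrite ?beB // swap_blocksE (negbTE (BnA _ (beB _ xA))) beB // be'be.
- by move=> u uA uB; rewrite swap_blocksE (negbTE uA) (negbTE uB).
Qed.

Lemma exchangeable_trans A B C : A \in P -> B \in P -> C \in P ->
  A != B -> A != C -> C != B -> #|A| <= #|C| -> #|C| <= #|B| ->
  exchangeable A C -> exchangeable C B -> exchangeable A B.
Proof.
move=> PA PB PC nAB nAC nCB lAC lCB xAC xCB.
have [a aA] := blk_ne0 hP PA; have [cc ccC] := blk_ne0 hP PC.
have [iAC [rAC embAC]] := embedding_of_card_le lAC aA.
have [iCB [rCB embCB]] := embedding_of_card_le lCB ccC.
have [[a1 a2 _] [c1 c2 _]] := (embAC, embCB).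
pose sCB := swap_blocks C B iCB rCB.
exists (fcomp sCB (fcomp (swap_blocks A C iAC rAC) sCB)).
  by apply: gen_comp; [|apply: gen_comp]; apply: gen_swap_blocks.
exact: (swap_blocks_conj hP PA PB PC nAB nAC nCB embAC embCB).
Qed.

Lemma exchangeable_succ A B : A \in P -> B \in P ->
  index #|B| (sizes P) = (index #|A| (sizes P)).+1 -> exchangeable A B.
Proof.
move=> PA PB eAB.
have [iA lA] := index_sizes PA; have [iB lB] := index_sizes PB.
move: iB lB; rewrite eAB => iB lB.
have lAB : #|A| < #|B| by rewrite -lA -lB l_lt.
have [A0 [B0 [PA0 PB0 cA0 cB0 xA0B0]]] := exchangeable_of_B iB.
rewrite {}lA in cA0; rewrite {}lB in cB0.
have nAB0 : A != B0 by apply: neq_of_card_lt; rewrite cB0.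
have xAB0 : exchangeable A B0.
  have [<- // | nA0A] := eqVneq A0 A.
  have nAA0 : A != A0 by rewrite eq_sym.
  have nA0B0 : A0 != B0 by apply: neq_of_card_lt; rewrite cA0 cB0.
  apply: (exchangeable_trans PA PB0 PA0 nAB0 nAA0 nA0B0); rewrite ?cA0 ?cB0 ?(ltnW lAB) //.
  exact: exchangeable_eq_card.
have [<- // | nB0B] := eqVneq B0 B.
apply: (exchangeable_trans PA PB PB0 (neq_of_card_lt lAB) nAB0 nB0B).
all: rewrite ?cB0 ?(ltnW lAB) //.
exact: exchangeable_eq_card.
Qed.

Lemma exchangeable_lt_card A B : A \in P -> B \in P -> #|A| < #|B| -> exchangeable A B.
Proof.
move=> PA; have [n] := ubnP (index #|B| (sizes P)); elim: n B => // n IH B hn PB lAB.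
have [iB lB] := index_sizes PB.
have iAB := index_sizes_lt PA PB lAB.
move: iB lB iAB hn.
case eB: (index #|B| (sizes P)) => [// | j] iB lB iAB hn.
move: iAB; rewrite ltnS leq_eqVlt => /orP[/eqP eAj | ltAj].
  by apply: exchangeable_succ; rewrite // eB eAj.
have [C PC cC] := block_of_size (ltnW iB).
have iC : index #|C| (sizes P) = j by rewrite cC index_l // ltnW.
have [iA lA] := index_sizes PA.
have lAC : #|A| < #|C| by rewrite -lA cC l_lt // ltnW.
have lCB : #|C| < #|B| by rewrite cC -lB l_lt.
apply: (exchangeable_trans PA PB PC (neq_of_card_lt lAB) (neq_of_card_lt lAC)
                            (neq_of_card_lt lCB)).
- exact: ltnW.
- exact: ltnW.
- by apply: IH => //; rewrite iC; lia.
- by apply: exchangeable_succ; rewrite // eB iC.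
Qed.

Lemma exchangeable_le_card A B : A \in P -> B \in P -> A != B -> #|A| <= #|B| ->
  exchangeable A B.
Proof.
move=> PA PB nAB; rewrite leq_eqVlt => /orP[/eqP eAB | lAB].
  exact: exchangeable_eq_card.
exact: exchangeable_lt_card.
Qed.

Definition displaced f := [set x | f x \notin blk x].

Section DisplacedStep.
Variables (f : {ffun X -> X}) (x0 : X).
Hypotheses (fsig : sigma_map P f) (x0_displaced : f x0 \notin blk x0).
Local Notation A := (blk x0).
Local Notation C := (blk (f x0)).

Let PA : A \in P. Proof. exact: blk_in_P. Qed.
Let PC : C \in P. Proof. exact: blk_in_P. Qed.
Let nAC : A != C. Proof. by apply: contraNneq x0_displaced => ->; rewrite mem_blk. Qed.
Let nCA : C != A. Proof. by rewrite eq_sym. Qed.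
Let dAC u : u \in A -> u \notin C := blk_disj hP PA PC nAC.
Let dCA u : u \in C -> u \notin A := blk_disj hP PC PA nCA.
Let fAC x : x \in A -> f x \in C. Proof. by move=> xA; apply: fsig.1. Qed.
Let fCA x : f x \in C -> x \in A.
Proof.
move=> fxC; have e : blk (f x) = blk (f x0) by rewrite (blkE hP PC fxC).
by rewrite -(sigma_map_blk_inj hP fsig e) mem_blk.
Qed.

(* Route [A] through an exchange with the smaller [C]: [f = f' \o swap \o hh],
   where [f'] no longer displaces [C] and [hh] fixes blocks. *)
Lemma displaced_step_le : #|C| <= #|A| -> exists f',
  [/\ sigma_map P f', displaced f' \proper displaced f & generated f' -> generated f].
Proof.
move=> le.
have [io [ro [ioA roC roio]]] := embedding_of_card_le le (mem_blk hP (f x0)).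
have Gswap := gen_swap_blocks PC PA nCA (exchangeable_le_card PC PA nCA le) ioA roC.
pose hh := [ffun x => if x \in A then io (f x) else x].
pose f' := [ffun x => if x \in A then f (ro x) else if x \in C then x else f x].
have fE : f = fcomp f' (fcomp (swap_blocks C A io ro) hh).
  apply/ffunP => x; rewrite !fcompE.
  have [xA | xA] := boolP (x \in A).
    have fC := fAC xA; have iA := ioA _ fC.
    rewrite [hh x]ffunE xA swap_blocksE (negbTE (dAC iA)) iA roio //.
    by rewrite ffunE (negbTE (dCA fC)) fC.
  have [xC | xC] := boolP (x \in C).
    have iA := ioA _ xC.
    by rewrite [hh x]ffunE (negbTE xA) swap_blocksE xC ffunE iA roio.
  rewrite [hh x]ffunE (negbTE xA) swap_blocksE (negbTE xC) (negbTE xA).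
  by rewrite ffunE (negbTE xA) (negbTE xC).
have hh_fix : fixes_blocks P hh.
  move=> x; rewrite ffunE; have [xA | xA] := boolP (x \in A); last exact: mem_blk.
  by rewrite (blkE hP PA xA) ioA // fAC.
have f'_pres : preserves_blocks P f'.
  move=> x y yx; rewrite !ffunE (mem_blk_trans hP PA yx) (mem_blk_trans hP PC yx).
  have [xA | xA] := boolP (x \in A).
    by apply: fsig.1; rewrite (blkE hP PC (roC _ xA)) roC // -(blkE hP PA xA).
  by case: ifP => // _; apply: fsig.1.
exists f'; split.
- split=> // B PB; have [x fx] := fsig.2 B PB.
  by exists (fcomp (swap_blocks C A io ro) hh x); rewrite -fcompE -fE.
- apply/properP; split.
    apply/subsetP => x; rewrite !inE ffunE.
    have [xA | xA] := boolP (x \in A).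
      by move=> _; rewrite (blkE hP PA xA) dCA // fAC.
    by case: ifP => xC //; rewrite mem_blk.
  exists (f x0); rewrite !inE.
    by apply: contraNN (dCA (mem_blk hP (f x0))); exact: fCA.
  by rewrite ffunE (negbTE (dCA (mem_blk hP _))) !(mem_blk hP (f x0)).
- move=> Gf'; rewrite fE; apply: gen_comp => //.
  by apply: gen_comp => //; exact: gen_fixes_blocks.
Qed.

(* Dually, through an exchange with the larger [C]: [f = hh \o swap \o f'],
   where [f'] fixes [A] and [hh] fixes blocks. *)
Lemma displaced_step_gt : #|A| < #|C| -> exists f',
  [/\ sigma_map P f', displaced f' \proper displaced f & generated f' -> generated f].
Proof.
move=> /ltnW le.
have [io [ro [ioC roA roio]]] := embedding_of_card_le le (mem_blk hP x0).
have Gswap := gen_swap_blocks PA PC nAC (exchangeable_le_card PA PC nAC le) ioC roA.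
pose f' := [ffun x => if x \in A then x else if f x \in A then io (f x) else f x].
pose hh := [ffun x => if x \in C then f (ro x) else x].
have fE : f = fcomp hh (fcomp (swap_blocks A C io ro) f').
  apply/ffunP => x; rewrite !fcompE.
  have [xA | xA] := boolP (x \in A).
    by rewrite [f' x]ffunE xA swap_blocksE xA ffunE ioC // roio.
  have [fA | fA] := boolP (f x \in A).
    have iC := ioC _ fA.
    rewrite [f' x]ffunE (negbTE xA) fA swap_blocksE (negbTE (dCA iC)) iC roio //.
    by rewrite ffunE (negbTE (dAC fA)).
  have fC : f x \notin C by apply: contraNN xA; exact: fCA.
  rewrite [f' x]ffunE (negbTE xA) (negbTE fA) swap_blocksE (negbTE fA) (negbTE fC).
  by rewrite ffunE (negbTE fC).
have hh_fix : fixes_blocks P hh.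
  move=> x; rewrite ffunE; have [xC | xC] := boolP (x \in C); last exact: mem_blk.
  by rewrite (blkE hP PC xC) fAC // roA.
have f'_pres : preserves_blocks P f'.
  move=> x y yx; rewrite !ffunE (mem_blk_trans hP PA yx).
  case: ifP => // xA; have fyx := fsig.1 _ _ yx.
  rewrite (mem_blk_trans hP PA fyx); case: ifP => // fxA.
  by rewrite (blkE hP PC (ioC _ fxA)) ioC // -(blkE hP PA fxA).
exists f'; split.
- split=> // B PB.
  have [-> | nBA] := eqVneq B A; first by exists x0; rewrite ffunE !(mem_blk hP x0).
  have [-> | nBC] := eqVneq B C.
    have [y fy] := fsig.2 A PA.
    have yA : y \notin A by apply: contraTN fy => /fAC; exact: dCA.
    by exists y; rewrite ffunE (negbTE yA) fy ioC.
  have [y fy] := fsig.2 B PB.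
  have fyA : f y \notin A := blk_disj hP PB PA nBA fy.
  have yA : y \notin A.
    by apply: contraTN fy => /fAC; apply: (blk_disj hP PC PB); rewrite eq_sym.
  by exists y; rewrite ffunE (negbTE yA) (negbTE fyA).
- apply/properP; split.
    apply/subsetP => x; rewrite !inE ffunE.
    case: ifP => [xA | xA]; first by rewrite mem_blk.
    case: ifP => // fxA _; apply: contraFN xA => fxx.
    by rewrite -(blkE hP PA fxA) (blk_same hP fxx) mem_blk.
  by exists x0; rewrite !inE ?ffunE ?mem_blk.
- by move=> Gf'; rewrite fE; apply: gen_comp; [exact: gen_fixes_blocks | exact: gen_comp].
Qed.

Lemma displaced_step : exists f',
  [/\ sigma_map P f', displaced f' \proper displaced f & generated f' -> generated f].
Proof.
by case: (leqP #|C| #|A|); [exact: displaced_step_le | exact: displaced_step_gt].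
Qed.

End DisplacedStep.

Lemma gen_sigma_map f : sigma_map P f -> generated f.
Proof.
have [n] := ubnP #|displaced f|; elim: n f => // n IH f hn fsig.
have [D0 | [x0]] := set_0Vmem (displaced f).
  apply: gen_fixes_blocks => x; apply/negPn/negP => nx.
  have : x \in displaced f by rewrite inE nx.
  by rewrite D0 inE.
rewrite inE => nx0.
have [f' [f'sig Df' genf']] := displaced_step fsig nx0.
by apply/genf'/IH => //; have := proper_card Df'; lia.
Qed.

End Generation.

Theorem theorem4p6 (X : finType) (P : {set {set X}})
  (hP : partition P [set: X]) (hX : 0 < #|X|)
  (b c : nat -> {ffun X -> X})
  (hb : forall i, i.+1 < nsizes P -> inB P i (b i))
  (hc : forall i, i < nsizes P -> Cneeded P i -> inC P i (c i)) :
  forall f, inSigma P f <->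
    gen (fun g => inS P g
                  \/ (exists2 i, i.+1 < nsizes P & g = b i)
                  \/ (exists i, [/\ i < nsizes P, Cneeded P i & g = c i])) f.
Proof.
move=> f; split=> [/(inSigmaP hP) | fG]; first exact: gen_sigma_map.
by apply/(inSigmaP hP); exact: (gen_sigma hP hb hc fG).
Qed.
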